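(* Let $S$ be a statement in Yul source syntax (expressions count as statements), $G$ a global environment, $L$ a local state and $\mathcal{N}$ a namespace, and let $S_{ret}$ range over $v \mid \langle\vec v\rangle \mid \mathbb{M}$ (a value, a tuple of values, or a mode). If $\langle S \mid G; L; \mathcal{N}\rangle \Downarrow \langle S_{ret} \mid G'; L'; \mathcal{N}'\rangle$ then $\langle S \mid G; L; \mathcal{N}\rangle \to^* \langle S_{ret} \mid G'; L'; \mathcal{N}'\rangle$.
   Context: Yul syntax. Fix (dialect-specific) values $u,v,c$, variables $x,y,z,f$, and opcodes $op$. Expressions: $M ::= f(M_1,\dots,M_n) \mid op(M_1,\dots,M_n) \mid x \mid v$. Statements: $S ::= \{S^*\} \mid \mathsf{function}\ f(\vec y) \to \vec z\ \{S^*\} \mid \mathsf{let}\ \vec x := M \mid \vec x := M \mid M \mid \mathsf{if}\ M\ \{S^*\} \mid \mathsf{switch}\ M\ (\mathsf{case}\ c_i\ \{S^*\})^*\ \mathsf{default}\ \{S^*\} \mid \mathsf{for}\ \{S^*\}\ M\ \{S^*\}\ \{S^*\} \mid \mathsf{break} \mid \mathsf{continue} \mid \mathsf{leave}$ (for-loop parts: init block, condition, post-iteration $S_p$, body $S_b$). These are the source-syntax statements. The dialect supplies $\mathsf{true}/\mathsf{false}$ predicates on values, external irregular modes $\mathcal{M}$, and an opcode relation $\langle op(v_1..v_n)\mid G\rangle\Downarrow_{\mathsf{opc}}\langle S'\mid G'\rangle$ ($G,G'$ global environments, $S'$ a tuple of values or external mode). Runtime syntax adds: modes $\mathbb{M}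 ::= \mathsf{regular}\mid\mathsf{break}\mid\mathsf{continue}\mid\mathsf{leave}\mid\mathcal{M}$; scoped blocks $\{S_1,..,S_n\}^{\mathcal{N}}_L$; catchers $\mathsf{Brk}[S]$, $\mathsf{Cnt}[S]$; call frames $\mathsf{Frame}^{\vec z}_L[S]$; tuples $\langle v_1..v_m\rangle$ with $\langle v\rangle=v$, $\langle\rangle=\mathsf{regular}$. Configurations $\langle S\mid G;L;\mathcal{N}\rangle$: $L$ finite map variables to values, $\mathcal{N}$ finite map function names to $(\vec y,\vec z,S_b)$. $L_1\upharpoonright L$: restriction to $\mathrm{dom}(L)$; $\uplus$ disjoint union; $\mathrm{funs}(\{S_1..S_n\})$ maps each function defined directly among the $S_i$ to its (parameters, returns, body); for $\mathcal{N}(f)=((y_1..y_n),(z_1..z_m),S_b)$, $L_f=\{y_i\mapsto v_i\}\uplus\{z_j\mapsto 0\}$. Big-step relations $\Downarrow$ (statements), $\Downarrow_{\mathsf{seq}}$ (sequences), $\Downarrow_{\mathsf{exp}}$ (expressions); in the claim, $\Downarrow$ on an expression means $\Downarrow_{\mathsf{exp}}$. Rules: (Block) if $\langle S_1,..,S_n\mid G;L;\mathcal{N}\uplus\mathcal{N}_1\rangle\Downarrow_{\mathsf{seq}}\langle\mathbb{M}\mid G_1;L_1;\mathcal{N}\uplus\mathcal{N}_1\rangle$ with $\mathcal{N}_1=\mathrm{funs}(\{S_1..S_n\})$ then $\langle\{S_1..S_n\}\mid G;L;\mathcal{N}\rangle\Downarrow\langle\mathbb{M}\mid G_1;L_1\upharpoonright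 L;\mathcal{N}\rangle$. (SeqEmpty) empty sequence $\Downarrow_{\mathsf{seq}}\mathsf{regular}$, unchanged. (SeqReg) $S_1\Downarrow\mathsf{regular}$ from $(G,L)$ to $(G_1,L_1)$ and $\vec S\Downarrow_{\mathsf{seq}}\mathbb{M}$ from $(G_1,L_1)$ to $(G_2,L_2)$ give $S_1,\vec S\Downarrow_{\mathsf{seq}}\mathbb{M}$ to $(G_2,L_2)$. (SeqIrreg) $S_1\Downarrow\mathbb{M}\in\{\mathsf{break},\mathsf{continue},\mathsf{leave}\}$ to $(G_1,L_1)$ gives $S_1,\vec S\Downarrow_{\mathsf{seq}}\mathbb{M}$ to $(G_1,L_1)$. (FunDef) function definitions $\Downarrow\mathsf{regular}$, unchanged. (Decl) if $M\Downarrow_{\mathsf{exp}}\langle\vec v\rangle$ from $(G,L)$ to $(G_1,L_1)$ and $\vec x\notin\mathrm{dom}(L)$ then $\mathsf{let}\ \vec x:=M\Downarrow\mathsf{regular}$ to $(G_1,L_1[\vec x\mapsto\vec v])$; assignment same with $\vec x\in\mathrm{dom}(L)$. (IfF) $M\Downarrow_{\mathsf{exp}}\mathsf{false}$ to $(G_0,L_0)$ gives $\mathsf{if}\ M\ S\Downarrow\mathsf{regular}$ to $(G_0,L_0)$. (IfT) $M\Downarrow_{\mathsf{exp}}\mathsf{true}$ to $(G_0,L_0)$ and $S\Downarrow\mathbb{M}$ to $(G_1,L_1)$ give $\mathsf{if}\ M\ S\Downarrow\mathbb{M}$ to $(G_1,L_1)$. (Switch) with cases $\mathsf{case}\ c_i\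 S_i$: if $M\Downarrow_{\mathsf{exp}}v\notin\{c_1..c_n\}$ evaluate $S_d$; if $M\Downarrow_{\mathsf{exp}}c_k$ with $c_k\notin\{c_1..c_{k-1}\}$ evaluate $S_k$; result is the branch's. (ForInit) for $n>0$, $\mathsf{for}\ \{S_1..S_n\}\ M\ S_p\ S_b$ evaluates as $\{S_1..S_n\ \mathsf{for}\ \{\}\ M\ S_p\ S_b\}$. For $W=\mathsf{for}\ \{\}\ M\ S_p\ S_b$: (ForFalse) $M\Downarrow_{\mathsf{exp}}\mathsf{false}$ to $(G_1,L_1)$ gives $W\Downarrow\mathsf{regular}$ to $(G_1,L_1)$; (ForHalt1) $M$ true to $(G_1,L_1)$, $S_b\Downarrow\mathbb{M}_1$ to $(G_2,L_2)$ with $(\mathbb{M}_1,\mathbb{M}_2)\in\{(\mathsf{leave},\mathsf{leave}),(\mathsf{break},\mathsf{regular})\}$ give $W\Downarrow\mathbb{M}_2$ to $(G_2,L_2)$; (ForHalt2) $M$ true, $S_b\Downarrow\{\mathsf{regular}\text{ or }\mathsf{continue}\}$, $S_p\Downarrow\mathsf{leave}$ to $(G_3,L_3)$ give $W\Downarrow\mathsf{leave}$ to $(G_3,L_3)$; (ForLoop) $M$ true, $S_b\Downarrow\{\mathsf{regular}\text{ or }\mathsf{continue}\}$, $S_p\Downarrow\mathsf{regular}$ to $(G_3,L_3)$, and $W\Downarrow\mathbb{M}$ from $(G_3,L_3)$ to $(G_4,L_4)$ give $W\Downarrow\mathbb{M}$ to $(G_4,L_4)$. (Ident) $x\Downarrow_{\mathsf{exp}}L(x)$,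 unchanged. (FunCall) evaluate arguments right to left, $\langle M_n\mid G;L;\mathcal{N}\rangle\Downarrow_{\mathsf{exp}}\langle v_n\mid G_1;L_1;\mathcal{N}\rangle$, …, $\langle M_1\mid G_{n-1};L_{n-1};\mathcal{N}\rangle\Downarrow_{\mathsf{exp}}\langle v_1\mid G_n;L_n;\mathcal{N}\rangle$; if $\langle S_b\mid G_n;L_f;\mathcal{N}\rangle\Downarrow\langle\mathbb{M}\mid G'';L';\mathcal{N}\rangle$ then $\langle f(M_1..M_n)\mid G;L;\mathcal{N}\rangle\Downarrow_{\mathsf{exp}}\langle\langle L'(z_1)..L'(z_m)\rangle\mid G'';L_n;\mathcal{N}\rangle$. (OpcCall) same argument evaluation, and if $\langle op(v_1..v_n)\mid G_n\rangle\Downarrow_{\mathsf{opc}}\langle v'_1..v'_m\mid G''\rangle$ the result is $\langle\langle v'_1..v'_m\rangle\mid G'';L_n;\mathcal{N}\rangle$. Small-step: contexts $E ::= [\,]\mid\{E,\vec S\}^{\mathcal{N}}_L\mid\mathsf{let}\ \vec x:=E\mid\vec x:=E\mid E_e\mid\mathsf{Cnt}[E]\mid\mathsf{Brk}[E]\mid\mathsf{if}\ E_e\ \{S^*\}\mid\mathsf{switch}\ E_e\dots$, $E_e ::= [\,]\mid f(\vec M,E_e,\vec v)\mid op(\vec M,E_e,\vec v)\mid\mathsf{Frame}^{\vec x}_L[E]$. Base rules ($G$ unchanged except opcodes): $\langle\{S_1..S_n\}\mid L;\mathcal{N}\rangle\to\langle\{S_1,..,S_n\}^{\mathcal{N}}_L\mid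 L;\mathcal{N}\uplus\mathrm{funs}(\{S_1..S_n\})\rangle$ ($n>0$); $\{\}\to\mathsf{regular}$; $\{\mathsf{regular},\vec S\}^{\mathcal{N}}_L\to\{\vec S\}^{\mathcal{N}}_L$ ($\vec S$ nonempty); $\langle\{\mathsf{regular}\}^{\mathcal{N}}_L\mid L_1;\mathcal{N}_1\rangle\to\langle\mathsf{regular}\mid L_1\upharpoonright L;\mathcal{N}\rangle$; $\langle\{\mathbb{M},\vec S\}^{\mathcal{N}}_L\mid L_1;\mathcal{N}_1\rangle\to\langle\mathbb{M}\mid L_1\upharpoonright L;\mathcal{N}\rangle$ for $\mathbb{M}\in\{\mathsf{break},\mathsf{continue},\mathsf{leave}\}$; function definition $\to\mathsf{regular}$; $\langle\mathsf{let}\ \vec x:=\langle\vec v\rangle\mid L\rangle\to\langle\mathsf{regular}\mid L[\vec x\mapsto\vec v]\rangle$ if $\vec x\notin\mathrm{dom}(L)$, assignment with $\vec x\in\mathrm{dom}(L)$; $\mathsf{if}\ \mathsf{false}\ S\to\mathsf{regular}$; $\mathsf{if}\ \mathsf{true}\ S\to S$; $\mathsf{switch}\ v\dots\to S_d$ ($v\notin\{c_i\}$), $\mathsf{switch}\ c_k\dots\to S_k$ ($c_k\notin\{c_1..c_{k-1}\}$); $\mathsf{for}\ \{S_1..S_n\}\ M\ S_p\ S_b\to\{S_1..S_n\ \mathsf{for}\ \{\}\ M\ S_p\ S_b\}$ ($n>0$); $\mathsf{for}\ \{\}\ M\ S_p\ S_b\to\mathsf{Brk}[\mathsf{if}\ M\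 \{\mathsf{Cnt}[S_b]\ S_p\ \mathsf{for}\ \{\}\ M\ S_p\ S_b\}]$; $\mathsf{Cnt}[\mathbb{M}]\to\mathbb{M}$ ($\mathbb{M}\in\{\mathsf{regular},\mathsf{break},\mathsf{leave}\}$), $\mathsf{Cnt}[\mathsf{continue}]\to\mathsf{regular}$; $\mathsf{Brk}[\mathbb{M}]\to\mathbb{M}$ ($\mathbb{M}\in\{\mathsf{regular},\mathsf{leave}\}$), $\mathsf{Brk}[\mathsf{break}]\to\mathsf{regular}$; $x\to L(x)$; $\langle f(\vec v)\mid L;\mathcal{N}\rangle\to\langle\mathsf{Frame}^{\vec z}_L[S_b]\mid L_f;\mathcal{N}\rangle$; $\langle\mathsf{Frame}^{z_1..z_m}_L[\mathbb{M}]\mid L';\mathcal{N}\rangle\to\langle\langle L'(z_1)..L'(z_m)\rangle\mid L;\mathcal{N}\rangle$ ($\mathbb{M}\in\{\mathsf{leave},\mathsf{regular}\}$); $\langle op(\vec v)\mid G;L;\mathcal{N}\rangle\to\langle S'\mid G';L;\mathcal{N}\rangle$ if $\langle op(\vec v)\mid G\rangle\Downarrow_{\mathsf{opc}}\langle S'\mid G'\rangle$. Top-level: $\langle E[S]\mid G;L;\mathcal{N}\rangle\to\langle E[S']\mid G';L';\mathcal{N}'\rangle$ whenever $\langle S\mid G;L;\mathcal{N}\rangle\to\langle S'\mid G';L';\mathcal{N}'\rangle$; and $\langle E[\mathcal{M}]\mid G;L;\mathcal{N}\rangle\to\langle\mathcal{M}\mid G';L';\mathcal{N}'\rangle$. $\to^*$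 is reflexive-transitive closure. *)

From Stdlib Require Import String List.
Import ListNotations.
Set Implicit Arguments.

(** A Yul dialect: values, global environments, external irregular modes,
    opcodes, the true/false predicates on values, the value 0 (used to
    initialise return variables) and the opcode relation
    <op(v1..vn) | G> ⇓opc <S' | G'> where S' is a tuple of values (inl)
    or an external mode (inr). *)
Record dialect := Dialect {
  val : Type;
  gstate : Type;
  extmode : Type;
  opname : Type;
  vtrue : val -> Prop;
  vfalse : val -> Prop;
  vzero : val;
  opc : opname -> list val -> gstate -> (list val + extmode) -> gstate -> Prop
}.

Section Yul.
Variable D : dialect.

Definition var := string.
Definition locals := var -> option (val D).

Inductive mode :=
| MRegular | MBreak | MContinue | MLeave | MExt (e : extmode D).

(** Runtime syntax (source syntax is the fragment singled out by [is_source]).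
    The statements break/continue/leave are the modes MBreak/MContinue/MLeave. *)
Inductive term :=
| TVal (v : val D)
| TVar (x : var)
| TCall (f : var) (args : list term)
| TOp (o : opname D) (args : list term)
| TBlock (ss : list term)
| TFunDef (f : var) (ys zs : list var) (body : list term)
| TLet (xs : list var) (e : term)
| TAssign (xs : list var) (e : term)
| TIf (c : term) (body : list term)
| TSwitch (e : term) (cases : list (val D * list term)) (dflt : list term)
| TFor (init : list term) (c : term) (post body : list term)
| TMode (m : mode)
| TScope (ss : list term) (N : var -> option (list var * list var * term)) (L : locals)
| TCnt (t : term)
| TBrk (t : term)
| TFrame (zs : list var) (L : locals) (t : term)
| TTuple (vs : list (val D)).

(** namespaces: function names -> (parameters, returns, body) *)
Definition ns := var -> option (list var * list var * term).

Definition tup (vs : list (val D)) : term :=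
  match vs with
  | [] => TMode MRegular
  | [v] => TVal v
  | _ => TTuple vs
  end.

Definition src_mode (m : mode) : bool :=
  match m with MBreak | MContinue | MLeave => true | _ => false end.

Fixpoint is_source (t : term) : bool :=
  match t with
  | TVal _ | TVar _ => true
  | TCall _ args => forallb is_source args
  | TOp _ args => forallb is_source args
  | TBlock ss => forallb is_source ss
  | TFunDef _ _ _ body => forallb is_source body
  | TLet _ e | TAssign _ e => is_source e
  | TIf c body => is_source c && forallb is_source body
  | TSwitch e cases dflt =>
      is_source e && forallb (fun c => forallb is_source (snd c)) cases
      && forallb is_source dflt
  | TFor init c post body =>
      forallb is_source init && is_source c && forallb is_source post
      && forallb is_source body
  | TMode m => src_mode m
  | _ => false
  end.

Definition is_ret (t : term) : Prop :=
  (exists v, t = TVal v) \/ (exists vs, t = tup vs) \/ (exists m, t = TMode m).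

Definition restrict (L1 L : locals) : locals :=
  fun x => match L x with Some _ => L1 x | None => None end.

Definition ns_union (N N1 : ns) : ns :=
  fun f => match N1 f with Some d => Some d | None => N f end.

Definition ns_disj (N N1 : ns) : Prop := forall f, N f = None \/ N1 f = None.

Definition empty_locals : locals := fun _ => None.

Fixpoint funs (ss : list term) : ns :=
  match ss with
  | [] => fun _ => None
  | TFunDef f ys zs b :: ss' =>
      fun g => if String.eqb g f then Some (ys, zs, TBlock b) else funs ss' g
  | _ :: ss' => funs ss'
  end.

Fixpoint upd (L : locals) (xs : list var) (vs : list (val D)) : locals :=
  match xs, vs with
  | x :: xs', v :: vs' => upd (fun y => if String.eqb y x then Some v else L y) xs' vs'
  | _, _ => L
  end.

Definition mkLf (ys : list var) (vs : list (val D)) (zs : list var) : locals :=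
  upd (upd empty_locals ys vs) zs (repeat (vzero D) (length zs)).

Fixpoint lookup_all (L : locals) (zs : list var) : option (list (val D)) :=
  match zs with
  | [] => Some []
  | z :: zs' =>
      match L z, lookup_all L zs' with
      | Some v, Some ws => Some (v :: ws)
      | _, _ => None
      end
  end.

Definition opres_term (r : list (val D) + extmode D) : term :=
  match r with inl vs => tup vs | inr e => TMode (MExt e) end.

Definition irreg (m : mode) : Prop := m = MBreak \/ m = MContinue \/ m = MLeave.

Inductive bstep : term -> gstate D -> locals -> ns -> term -> gstate D -> locals -> ns -> Prop :=
| B_Block : forall ss G L N m G1 L1,
    ns_disj N (funs ss) ->
    bseq ss G L (ns_union N (funs ss)) m G1 L1 ->
    bstep (TBlock ss) G L N (TMode m) G1 (restrict L1 L) N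
| B_FunDef : forall f ys zs b G L N,
    bstep (TFunDef f ys zs b) G L N (TMode MRegular) G L N
| B_Decl : forall xs M vs G L N G1 L1,
    bstep M G L N (tup vs) G1 L1 N ->
    length xs = length vs ->
    (forall x, In x xs -> L x = None) ->
    bstep (TLet xs M) G L N (TMode MRegular) G1 (upd L1 xs vs) N
| B_Assign : forall xs M vs G L N G1 L1,
    bstep M G L N (tup vs) G1 L1 N ->
    length xs = length vs ->
    (forall x, In x xs -> L x <> None) ->
    bstep (TAssign xs M) G L N (TMode MRegular) G1 (upd L1 xs vs) N
| B_IfF : forall M body v G L N G0 L0,
    bstep M G L N (TVal v) G0 L0 N -> vfalse D v ->
    bstep (TIf M body) G L N (TMode MRegular) G0 L0 N
| B_IfT : forall M body v m G L N G0 L0 G1 L1,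
    bstep M G L N (TVal v) G0 L0 N -> vtrue D v ->
    bstep (TBlock body) G0 L0 N (TMode m) G1 L1 N ->
    bstep (TIf M body) G L N (TMode m) G1 L1 N
| B_SwitchD : forall M cases dflt v R G L N G0 L0 G1 L1,
    bstep M G L N (TVal v) G0 L0 N ->
    ~ In v (map fst cases) ->
    bstep (TBlock dflt) G0 L0 N R G1 L1 N ->
    bstep (TSwitch M cases dflt) G L N R G1 L1 N
| B_SwitchC : forall M cases pre c body post dflt R G L N G0 L0 G1 L1,
    cases = pre ++ (c, body) :: post ->
    ~ In c (map fst pre) ->
    bstep M G L N (TVal c) G0 L0 N ->
    bstep (TBlock body) G0 L0 N R G1 L1 N ->
    bstep (TSwitch M cases dflt) G L N R G1 L1 N
| B_ForInit : forall init M Sp Sb R G L N G1 L1 N1,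
    init <> [] ->
    bstep (TBlock (init ++ [TFor [] M Sp Sb])) G L N R G1 L1 N1 ->
    bstep (TFor init M Sp Sb) G L N R G1 L1 N1
| B_ForFalse : forall M Sp Sb v G L N G1 L1,
    bstep M G L N (TVal v) G1 L1 N -> vfalse D v ->
    bstep (TFor [] M Sp Sb) G L N (TMode MRegular) G1 L1 N
| B_ForHalt1 : forall M Sp Sb v m1 m2 G L N G1 L1 G2 L2,
    bstep M G L N (TVal v) G1 L1 N -> vtrue D v ->
    bstep (TBlock Sb) G1 L1 N (TMode m1) G2 L2 N ->
    ((m1 = MLeave /\ m2 = MLeave) \/ (m1 = MBreak /\ m2 = MRegular)) ->
    bstep (TFor [] M Sp Sb) G L N (TMode m2) G2 L2 N
| B_ForHalt2 : forall M Sp Sb v m1 G L N G1 L1 G2 L2 G3 L3,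
    bstep M G L N (TVal v) G1 L1 N -> vtrue D v ->
    bstep (TBlock Sb) G1 L1 N (TMode m1) G2 L2 N ->
    (m1 = MRegular \/ m1 = MContinue) ->
    bstep (TBlock Sp) G2 L2 N (TMode MLeave) G3 L3 N ->
    bstep (TFor [] M Sp Sb) G L N (TMode MLeave) G3 L3 N
| B_ForLoop : forall M Sp Sb v m1 m G L N G1 L1 G2 L2 G3 L3 G4 L4,
    bstep M G L N (TVal v) G1 L1 N -> vtrue D v ->
    bstep (TBlock Sb) G1 L1 N (TMode m1) G2 L2 N ->
    (m1 = MRegular \/ m1 = MContinue) ->
    bstep (TBlock Sp) G2 L2 N (TMode MRegular) G3 L3 N ->
    bstep (TFor [] M Sp Sb) G3 L3 N (TMode m) G4 L4 N ->
    bstep (TFor [] M Sp Sb) G L N (TMode m) G4 L4 N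
| B_Ident : forall x v G L N,
    L x = Some v ->
    bstep (TVar x) G L N (TVal v) G L N
| B_Val : forall v G L N,
    bstep (TVal v) G L N (TVal v) G L N
| B_Mode : forall m G L N,
    bstep (TMode m) G L N (TMode m) G L N
| B_FunCall : forall f Ms vs ys zs Sb m ws G L N Gn Ln G'' L',
    bargs Ms G L N vs Gn Ln ->
    N f = Some (ys, zs, Sb) ->
    length vs = length ys ->
    NoDup (ys ++ zs) ->
    bstep Sb Gn (mkLf ys vs zs) N (TMode m) G'' L' N ->
    (m = MRegular \/ m = MLeave) ->
    lookup_all L' zs = Some ws ->
    bstep (TCall f Ms) G L N (tup ws) G'' Ln N
| B_OpcCall : forall o Ms vs ws G L N Gn Ln G'',
    bargs Ms G L N vs Gn Ln ->
    opc D o vs Gn (inl ws) G'' ->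
    bstep (TOp o Ms) G L N (tup ws) G'' Ln N
with bseq : list term -> gstate D -> locals -> ns -> mode -> gstate D -> locals -> Prop :=
| Seq_Empty : forall G L N, bseq [] G L N MRegular G L
| Seq_Reg : forall S1 Ss m G L N G1 L1 G2 L2,
    bstep S1 G L N (TMode MRegular) G1 L1 N ->
    bseq Ss G1 L1 N m G2 L2 ->
    bseq (S1 :: Ss) G L N m G2 L2
| Seq_Irreg : forall S1 Ss m G L N G1 L1,
    irreg m ->
    bstep S1 G L N (TMode m) G1 L1 N ->
    bseq (S1 :: Ss) G L N m G1 L1
(* arguments M1..Mn are evaluated right to left: Mn first, M1 last *)
with bargs : list term -> gstate D -> locals -> ns -> list (val D) -> gstate D -> locals -> Prop :=
| Args_Nil : forall G L N, bargs [] G L N [] G L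
| Args_Cons : forall M Ms v vs G L N G1 L1 G2 L2,
    bargs Ms G L N vs G1 L1 ->
    bstep M G1 L1 N (TVal v) G2 L2 N ->
    bargs (M :: Ms) G L N (v :: vs) G2 L2.

Inductive ectx :=
| EHole
| ECall (f : var) (Ms : list term) (E : ectx) (vs : list (val D))
| EOp (o : opname D) (Ms : list term) (E : ectx) (vs : list (val D))
| EFrame (zs : list var) (L : locals) (E : ctx)
with ctx :=
| CE (E : ectx)
| CScope (E : ctx) (ss : list term) (N : ns) (L : locals)
| CLet (xs : list var) (E : ctx)
| CAssign (xs : list var) (E : ctx)
| CCnt (E : ctx)
| CBrk (E : ctx)
| CIf (E : ectx) (body : list term)
| CSwitch (E : ectx) (cases : list (val D * list term)) (dflt : list term).

Fixpoint eplug (E : ectx) (t : term) : term :=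
  match E with
  | EHole => t
  | ECall f Ms E' vs => TCall f (Ms ++ eplug E' t :: map TVal vs)
  | EOp o Ms E' vs => TOp o (Ms ++ eplug E' t :: map TVal vs)
  | EFrame zs L E' => TFrame zs L (cplug E' t)
  end
with cplug (E : ctx) (t : term) : term :=
  match E with
  | CE E' => eplug E' t
  | CScope E' ss N L => TScope (cplug E' t :: ss) N L
  | CLet xs E' => TLet xs (cplug E' t)
  | CAssign xs E' => TAssign xs (cplug E' t)
  | CCnt E' => TCnt (cplug E' t)
  | CBrk E' => TBrk (cplug E' t)
  | CIf E' body => TIf (eplug E' t) body
  | CSwitch E' cases dflt => TSwitch (eplug E' t) cases dflt
  end.

Inductive base : term -> gstate D -> locals -> ns -> term -> gstate D -> locals -> ns -> Prop :=
| R_BlockEnter : forall ss G L N,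
    ss <> [] -> ns_disj N (funs ss) ->
    base (TBlock ss) G L N (TScope ss N L) G L (ns_union N (funs ss))
| R_BlockEmpty : forall G L N,
    base (TBlock []) G L N (TMode MRegular) G L N
| R_ScopeReg : forall ss N0 L0 G L N,
    ss <> [] ->
    base (TScope (TMode MRegular :: ss) N0 L0) G L N (TScope ss N0 L0) G L N
| R_ScopeEnd : forall N0 L0 G L1 N1,
    base (TScope [TMode MRegular] N0 L0) G L1 N1 (TMode MRegular) G (restrict L1 L0) N0
| R_ScopeIrreg : forall m ss N0 L0 G L1 N1,
    irreg m ->
    base (TScope (TMode m :: ss) N0 L0) G L1 N1 (TMode m) G (restrict L1 L0) N0
| R_FunDef : forall f ys zs b G L N,
    base (TFunDef f ys zs b) G L N (TMode MRegular) G L N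
| R_Let : forall xs vs G L N,
    length xs = length vs ->
    (forall x, In x xs -> L x = None) ->
    base (TLet xs (tup vs)) G L N (TMode MRegular) G (upd L xs vs) N
| R_Assign : forall xs vs G L N,
    length xs = length vs ->
    (forall x, In x xs -> L x <> None) ->
    base (TAssign xs (tup vs)) G L N (TMode MRegular) G (upd L xs vs) N
| R_IfF : forall v body G L N,
    vfalse D v -> base (TIf (TVal v) body) G L N (TMode MRegular) G L N
| R_IfT : forall v body G L N,
    vtrue D v -> base (TIf (TVal v) body) G L N (TBlock body) G L N
| R_SwitchD : forall v cases dflt G L N,
    ~ In v (map fst cases) ->
    base (TSwitch (TVal v) cases dflt) G L N (TBlock dflt) G L N
| R_SwitchC : forall cases pre c body post dflt G L N,
    cases = pre ++ (c, body) :: post ->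
    ~ In c (map fst pre) ->
    base (TSwitch (TVal c) cases dflt) G L N (TBlock body) G L N
| R_ForInit : forall init M Sp Sb G L N,
    init <> [] ->
    base (TFor init M Sp Sb) G L N (TBlock (init ++ [TFor [] M Sp Sb])) G L N
| R_ForUnfold : forall M Sp Sb G L N,
    base (TFor [] M Sp Sb) G L N
         (TBrk (TIf M [TCnt (TBlock Sb); TBlock Sp; TFor [] M Sp Sb])) G L N
| R_Cnt : forall m G L N,
    (m = MRegular \/ m = MBreak \/ m = MLeave) ->
    base (TCnt (TMode m)) G L N (TMode m) G L N
| R_CntC : forall G L N,
    base (TCnt (TMode MContinue)) G L N (TMode MRegular) G L N
| R_Brk : forall m G L N,
    (m = MRegular \/ m = MLeave) ->
    base (TBrk (TMode m)) G L N (TMode m) G L N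
| R_BrkB : forall G L N,
    base (TBrk (TMode MBreak)) G L N (TMode MRegular) G L N
| R_Var : forall x v G L N,
    L x = Some v -> base (TVar x) G L N (TVal v) G L N
| R_Call : forall f vs ys zs Sb G L N,
    N f = Some (ys, zs, Sb) ->
    length vs = length ys ->
    NoDup (ys ++ zs) ->
    base (TCall f (map TVal vs)) G L N (TFrame zs L Sb) G (mkLf ys vs zs) N
| R_Ret : forall zs L0 m ws G L' N,
    (m = MLeave \/ m = MRegular) ->
    lookup_all L' zs = Some ws ->
    base (TFrame zs L0 (TMode m)) G L' N (tup ws) G L0 N
| R_Op : forall o vs r G G' L N,
    opc D o vs G r G' ->
    base (TOp o (map TVal vs)) G L N (opres_term r) G' L N.

Inductive step : term -> gstate D -> locals -> ns -> term -> gstate D -> locals -> ns -> Prop :=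
| S_Ctx : forall E t G L N t' G' L' N',
    base t G L N t' G' L' N' ->
    step (cplug E t) G L N (cplug E t') G' L' N'
| S_Ext : forall E e G L N G' L' N',
    step (cplug E (TMode (MExt e))) G L N (TMode (MExt e)) G' L' N'.

Inductive steps : term -> gstate D -> locals -> ns -> term -> gstate D -> locals -> ns -> Prop :=
| Steps_refl : forall t G L N, steps t G L N t G L N
| Steps_trans : forall t G L N t1 G1 L1 N1 t2 G2 L2 N2,
    step t G L N t1 G1 L1 N1 ->
    steps t1 G1 L1 N1 t2 G2 L2 N2 ->
    steps t G L N t2 G2 L2 N2.

End Yul.

(* Each big-step rule is replayed by small steps, by mutual induction on derivations of
   statements, statement sequences and argument lists: a block becomes a scope consumed
   statement by statement, a loop iteration goes through [Brk[if M {Cnt[Sb] Sp loop}]],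
   arguments are reduced right to left inside expression contexts, and a call runs its body
   inside a frame.  Two invariants make the side conditions of the two semantics agree:
   expressions leave the local state unchanged, and blocks and loops never enlarge its domain,
   so the restriction performed when a scope is left is the identity. *)

From Stdlib Require Import List FunctionalExtensionality.
Import ListNotations.

#[local] Arguments TVal {D} v.
#[local] Arguments TVar {D} x.
#[local] Arguments MRegular {D}.
#[local] Arguments MBreak {D}.
#[local] Arguments MContinue {D}.
#[local] Arguments MLeave {D}.
#[local] Arguments EHole {D}.
#[local] Arguments tup {D} vs.

Scheme bstep_mut := Induction for bstep Sort Prop
with bseq_mut := Induction for bseq Sort Prop
with bargs_mut := Induction for bargs Sort Prop.

Section Simulation.
Variable D : dialect.
Implicit Types (G : gstate D) (L : locals D) (N : ns D) (m : mode D) (v : val D).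

(* [steps] also contains the abort rule [S_Ext], which does not commute with plugging into
   a context.  Big-step derivations never need it, so we use base steps under contexts,
   which lift through any enclosing context. *)
Section PlugSteps.
Context {C : Type} (plug : C -> term D -> term D).

Inductive plug_steps : term D -> gstate D -> locals D -> ns D ->
                       term D -> gstate D -> locals D -> ns D -> Prop :=
| plug_steps_refl t G L N : plug_steps t G L N t G L N
| plug_steps_cons E t t' G L N G1 L1 N1 u G2 L2 N2 :
    base t G L N t' G1 L1 N1 ->
    plug_steps (plug E t') G1 L1 N1 u G2 L2 N2 ->
    plug_steps (plug E t) G L N u G2 L2 N2.

Lemma plug_steps_trans t G L N t1 G1 L1 N1 t2 G2 L2 N2 :
  plug_steps t G L N t1 G1 L1 N1 -> plug_steps t1 G1 L1 N1 t2 G2 L2 N2 ->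
  plug_steps t G L N t2 G2 L2 N2.
Proof. induction 1; intros; [assumption | econstructor; eauto]. Qed.

End PlugSteps.

Lemma plug_steps_map {C1 C2 : Type} {p1 : C1 -> term D -> term D} {p2 : C2 -> term D -> term D}
    (W : term D -> term D) (w : C1 -> C2) :
  (forall E t, W (p1 E t) = p2 (w E) t) ->
  forall t G L N t' G' L' N',
  plug_steps p1 t G L N t' G' L' N' -> plug_steps p2 (W t) G L N (W t') G' L' N'.
Proof.
  intros HW t G L N t' G' L' N' H.
  induction H as [|E t0 t0' G L N G1 L1 N1 u G2 L2 N2 Hb _ IH]; [constructor|].
  rewrite HW in *. econstructor; eassumption.
Qed.

Notation csteps := (plug_steps (@cplug D)).
Notation esteps := (plug_steps (@eplug D)).

Lemma csteps_steps t G L N t' G' L' N' :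
  csteps t G L N t' G' L' N' -> steps t G L N t' G' L' N'.
Proof.
  induction 1; [constructor | econstructor; [apply S_Ctx; eassumption | assumption]].
Qed.

Lemma csteps_base t G L N t' G' L' N' :
  base t G L N t' G' L' N' -> csteps t G L N t' G' L' N'.
Proof.
  intro Hb. change (csteps (cplug (CE EHole) t) G L N t' G' L' N').
  econstructor; [exact Hb | constructor].
Qed.

Lemma esteps_base t G L N t' G' L' N' :
  base t G L N t' G' L' N' -> esteps t G L N t' G' L' N'.
Proof.
  intro Hb. change (esteps (eplug EHole t) G L N t' G' L' N').
  econstructor; [exact Hb | constructor].
Qed.

Lemma esteps_csteps : forall t G L N t' G' L' N',
  esteps t G L N t' G' L' N' -> csteps t G L N t' G' L' N'.
Proof. exact (plug_steps_map (fun t => t) (@CE D) (fun _ _ => eq_refl)). Qed.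

Lemma csteps_ctx_let xs : forall t G L N t' G' L' N',
  csteps t G L N t' G' L' N' -> csteps (TLet xs t) G L N (TLet xs t') G' L' N'.
Proof. exact (plug_steps_map (TLet xs) (CLet xs) (fun _ _ => eq_refl)). Qed.

Lemma csteps_ctx_assign xs : forall t G L N t' G' L' N',
  csteps t G L N t' G' L' N' -> csteps (TAssign xs t) G L N (TAssign xs t') G' L' N'.
Proof. exact (plug_steps_map (TAssign xs) (CAssign xs) (fun _ _ => eq_refl)). Qed.

Lemma csteps_ctx_cnt : forall t G L N t' G' L' N',
  csteps t G L N t' G' L' N' -> csteps (TCnt t) G L N (TCnt t') G' L' N'.
Proof. exact (plug_steps_map (@TCnt D) (@CCnt D) (fun _ _ => eq_refl)). Qed.

Lemma csteps_ctx_brk : forall t G L N t' G' L' N',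
  csteps t G L N t' G' L' N' -> csteps (TBrk t) G L N (TBrk t') G' L' N'.
Proof. exact (plug_steps_map (@TBrk D) (@CBrk D) (fun _ _ => eq_refl)). Qed.

Lemma csteps_ctx_scope ss N0 L0 : forall t G L N t' G' L' N',
  csteps t G L N t' G' L' N' ->
  csteps (TScope (t :: ss) N0 L0) G L N (TScope (t' :: ss) N0 L0) G' L' N'.
Proof.
  exact (plug_steps_map (fun t => TScope (t :: ss) N0 L0) (fun E => CScope E ss N0 L0)
           (fun _ _ => eq_refl)).
Qed.

Lemma esteps_ctx_if body : forall t G L N t' G' L' N',
  esteps t G L N t' G' L' N' -> csteps (TIf t body) G L N (TIf t' body) G' L' N'.
Proof.
  exact (plug_steps_map (fun t => TIf t body) (fun E => CIf E body) (fun _ _ => eq_refl)).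
Qed.

Lemma esteps_ctx_switch cases dflt : forall t G L N t' G' L' N',
  esteps t G L N t' G' L' N' ->
  csteps (TSwitch t cases dflt) G L N (TSwitch t' cases dflt) G' L' N'.
Proof.
  exact (plug_steps_map (fun t => TSwitch t cases dflt) (fun E => CSwitch E cases dflt)
           (fun _ _ => eq_refl)).
Qed.

Lemma csteps_ctx_frame zs L0 : forall t G L N t' G' L' N',
  csteps t G L N t' G' L' N' -> esteps (TFrame zs L0 t) G L N (TFrame zs L0 t') G' L' N'.
Proof. exact (plug_steps_map (TFrame zs L0) (EFrame zs L0) (fun _ _ => eq_refl)). Qed.

Definition expr_term (t : term D) : bool :=
  match t with TVal _ | TVar _ | TCall _ _ | TOp _ _ => true | _ => false end.

Definition dom_incl (L' L : locals D) : Prop := forall x, L x = None -> L' x = None.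

Lemma dom_incl_trans L1 L2 L3 : dom_incl L1 L2 -> dom_incl L2 L3 -> dom_incl L1 L3.
Proof. intros H12 H23 x Hx. auto. Qed.

Lemma dom_incl_refl L : dom_incl L L.
Proof. intros x Hx. exact Hx. Qed.

Lemma restrict_dom_incl L1 L : dom_incl (restrict L1 L) L.
Proof. intros x Hx. unfold restrict. rewrite Hx. reflexivity. Qed.

Lemma restrict_id {L1 L} : dom_incl L1 L -> restrict L1 L = L1.
Proof.
  intro H. extensionality x. unfold restrict.
  destruct (L x) eqn:Hx; [reflexivity | symmetry; auto].
Qed.

Lemma bstep_non_mode_expr {S G L N R G' L' N'} :
  bstep S G L N R G' L' N' -> (forall m, R <> TMode m) -> expr_term S = true.
Proof.
  intros H HR. destruct H; try reflexivity; try (exfalso; eapply HR; reflexivity).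
  all: match goal with Hb : bstep (TBlock _) _ _ _ _ _ _ _ |- _ =>
         inversion Hb; subst; exfalso; eapply HR; reflexivity end.
Qed.

Lemma bstep_val_expr {S G L N v G' L' N'} :
  bstep S G L N (TVal v) G' L' N' -> expr_term S = true.
Proof. intro H. apply (bstep_non_mode_expr H). discriminate. Qed.

Lemma bstep_expr_locals {S G L N R G' L' N'} :
  bstep S G L N R G' L' N' -> expr_term S = true -> L' = L.
Proof.
  revert S G L N R G' L' N'.
  apply (bstep_mut D (fun S _ L _ _ _ L' _ _ => expr_term S = true -> L' = L)
                     (fun _ _ _ _ _ _ _ _ => True)
                     (fun _ _ L _ _ _ L' _ => L' = L));
    intros; simpl in *; try discriminate; eauto using eq_trans, bstep_val_expr.
Qed.

Lemma bstep_block_dom {ss G L N R G' L' N'} :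
  bstep (TBlock ss) G L N R G' L' N' -> dom_incl L' L.
Proof. inversion 1; subst. apply restrict_dom_incl. Qed.

Lemma bstep_loop_result {M Sp Sb G L N R G' L' N'} :
  bstep (TFor [] M Sp Sb) G L N R G' L' N' ->
  (R = TMode MRegular \/ R = TMode MLeave) /\ dom_incl L' L.
Proof.
  remember (TFor [] M Sp Sb) as S eqn:HS. intro H. revert HS.
  induction H; intro HS; inversion HS; subst; try congruence;
    pose proof (bstep_expr_locals H (bstep_val_expr H)); subst L1.
  - split; [auto | apply dom_incl_refl].
  - split; [intuition subst; auto | eauto using bstep_block_dom].
  - split; [auto | eauto using dom_incl_trans, bstep_block_dom].
  - destruct (IHbstep4 eq_refl) as [HR Hdom].
    split; [exact HR | eauto using dom_incl_trans, bstep_block_dom].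
Qed.

Corollary bstep_loop_mode M Sp Sb G L N m G' L' N' :
  bstep (TFor [] M Sp Sb) G L N (TMode m) G' L' N' -> m = MRegular \/ m = MLeave.
Proof. intro H. destruct (proj1 (bstep_loop_result H)) as [[=] | [=]]; auto. Qed.

Corollary bstep_loop_dom M Sp Sb G L N R G' L' N' :
  bstep (TFor [] M Sp Sb) G L N R G' L' N' -> dom_incl L' L.
Proof. intro H. exact (proj2 (bstep_loop_result H)). Qed.

Lemma csteps_scope_regular s ss N0 L0 G L N G1 L1 N1 :
  ss <> [] -> csteps s G L N (TMode MRegular) G1 L1 N1 ->
  csteps (TScope (s :: ss) N0 L0) G L N (TScope ss N0 L0) G1 L1 N1.
Proof.
  intros Hss Hs. eapply plug_steps_trans; [apply csteps_ctx_scope, Hs|].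
  apply csteps_base, R_ScopeReg, Hss.
Qed.

Lemma csteps_scope_last s N0 L0 G L N G1 L1 N1 :
  csteps s G L N (TMode MRegular) G1 L1 N1 ->
  csteps (TScope [s] N0 L0) G L N (TMode MRegular) G1 (restrict L1 L0) N0.
Proof.
  intro Hs. eapply plug_steps_trans; [apply csteps_ctx_scope, Hs|].
  apply csteps_base, R_ScopeEnd.
Qed.

Lemma csteps_scope_irreg s ss N0 L0 m G L N G1 L1 N1 :
  irreg m -> csteps s G L N (TMode m) G1 L1 N1 ->
  csteps (TScope (s :: ss) N0 L0) G L N (TMode m) G1 (restrict L1 L0) N0.
Proof.
  intros Hm Hs. eapply plug_steps_trans; [apply csteps_ctx_scope, Hs|].
  apply csteps_base, R_ScopeIrreg, Hm.
Qed.

Lemma csteps_cnt_regular t m G L N G' L' N' :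
  m = MRegular \/ m = MContinue -> csteps t G L N (TMode m) G' L' N' ->
  csteps (TCnt t) G L N (TMode MRegular) G' L' N'.
Proof.
  intros Hm Ht. eapply plug_steps_trans; [apply csteps_ctx_cnt, Ht|].
  apply csteps_base. destruct Hm as [-> | ->]; [apply R_Cnt; auto | apply R_CntC].
Qed.

Definition loop_body (M : term D) Sp Sb : list (term D) :=
  [TCnt (TBlock Sb); TBlock Sp; TFor [] M Sp Sb].

Lemma csteps_for_false M Sp Sb v G L N G1 L1 :
  esteps M G L N (TVal v) G1 L1 N -> vfalse D v ->
  csteps (TFor [] M Sp Sb) G L N (TMode MRegular) G1 L1 N.
Proof.
  intros HM Hv.
  eapply plug_steps_trans; [apply csteps_base, R_ForUnfold|].
  eapply plug_steps_trans; [apply csteps_ctx_brk, esteps_ctx_if, HM|].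
  eapply plug_steps_trans; [apply csteps_ctx_brk, csteps_base, R_IfF, Hv|].
  apply csteps_base, R_Brk; auto.
Qed.

Lemma csteps_for_true M Sp Sb v G L N G1 L1 :
  esteps M G L N (TVal v) G1 L1 N -> vtrue D v ->
  csteps (TFor [] M Sp Sb) G L N (TBrk (TScope (loop_body M Sp Sb) N L1)) G1 L1 N.
Proof.
  intros HM Hv.
  eapply plug_steps_trans; [apply csteps_base, R_ForUnfold|].
  eapply plug_steps_trans; [apply csteps_ctx_brk, esteps_ctx_if, HM|].
  eapply plug_steps_trans; [apply csteps_ctx_brk, csteps_base, R_IfT, Hv|].
  (* [funs (loop_body M Sp Sb)] is empty, so [ns_union N (funs _)] is [N] up to eta *)
  apply csteps_ctx_brk, csteps_base.
  refine (R_BlockEnter G1 L1 _ _); [discriminate | right; reflexivity].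
Qed.

Lemma csteps_for_halt_body M Sp Sb v m1 m2 G L N G1 L1 G2 L2 :
  esteps M G L N (TVal v) G1 L1 N -> vtrue D v ->
  csteps (TBlock Sb) G1 L1 N (TMode m1) G2 L2 N -> dom_incl L2 L1 ->
  (m1 = MLeave /\ m2 = MLeave) \/ (m1 = MBreak /\ m2 = MRegular) ->
  csteps (TFor [] M Sp Sb) G L N (TMode m2) G2 L2 N.
Proof.
  intros HM Hv HSb Hdom Hm.
  assert (Hbody : csteps (TScope (loop_body M Sp Sb) N L1) G1 L1 N
                         (TMode m1) G2 (restrict L2 L1) N).
  { eapply csteps_scope_irreg; [destruct Hm as [[-> _] | [-> _]]; unfold irreg; auto|].
    eapply plug_steps_trans; [apply csteps_ctx_cnt, HSb|].
    apply csteps_base, R_Cnt. destruct Hm as [[-> _] | [-> _]]; auto. }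
  rewrite (restrict_id Hdom) in Hbody.
  eapply plug_steps_trans; [eapply csteps_for_true; eassumption|].
  eapply plug_steps_trans; [apply csteps_ctx_brk, Hbody|].
  apply csteps_base. destruct Hm as [[-> ->] | [-> ->]]; [apply R_Brk; auto | apply R_BrkB].
Qed.

Lemma csteps_for_halt_post M Sp Sb v m1 G L N G1 L1 G2 L2 G3 L3 :
  esteps M G L N (TVal v) G1 L1 N -> vtrue D v ->
  csteps (TBlock Sb) G1 L1 N (TMode m1) G2 L2 N -> m1 = MRegular \/ m1 = MContinue ->
  csteps (TBlock Sp) G2 L2 N (TMode MLeave) G3 L3 N -> dom_incl L3 L1 ->
  csteps (TFor [] M Sp Sb) G L N (TMode MLeave) G3 L3 N.
Proof.
  intros HM Hv HSb Hm1 HSp Hdom.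
  eapply plug_steps_trans; [eapply csteps_for_true; eassumption|].
  rewrite <- (restrict_id Hdom).
  eapply plug_steps_trans; [apply csteps_ctx_brk | apply csteps_base, R_Brk; auto].
  eapply plug_steps_trans;
    [apply csteps_scope_regular; [discriminate | eapply csteps_cnt_regular; eassumption]|].
  eapply csteps_scope_irreg; [unfold irreg; auto | exact HSp].
Qed.

Lemma csteps_for_loop M Sp Sb v m1 m G L N G1 L1 G2 L2 G3 L3 G4 L4 :
  esteps M G L N (TVal v) G1 L1 N -> vtrue D v ->
  csteps (TBlock Sb) G1 L1 N (TMode m1) G2 L2 N -> m1 = MRegular \/ m1 = MContinue ->
  csteps (TBlock Sp) G2 L2 N (TMode MRegular) G3 L3 N ->
  csteps (TFor [] M Sp Sb) G3 L3 N (TMode m) G4 L4 N -> m = MRegular \/ m = MLeave ->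
  dom_incl L4 L1 ->
  csteps (TFor [] M Sp Sb) G L N (TMode m) G4 L4 N.
Proof.
  intros HM Hv HSb Hm1 HSp Hloop Hm Hdom.
  eapply plug_steps_trans; [eapply csteps_for_true; eassumption|].
  rewrite <- (restrict_id Hdom).
  eapply plug_steps_trans; [apply csteps_ctx_brk | apply csteps_base, R_Brk; auto].
  eapply plug_steps_trans;
    [apply csteps_scope_regular; [discriminate | eapply csteps_cnt_regular; eassumption]|].
  eapply plug_steps_trans; [apply csteps_scope_regular; [discriminate | exact HSp]|].
  destruct Hm as [-> | ->];
    [eapply csteps_scope_last | eapply csteps_scope_irreg; [unfold irreg; auto|]]; exact Hloop.
Qed.

(* The side condition of [let]/assignment is checked before evaluating the right-hand side
   by the big-step rule but after it by the small-step rule; they agree because either the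
   right-hand side is an expression or no variable is assigned. *)
Lemma bstep_decl_locals (P : option (val D) -> Prop) {M xs vs G L N G1 L1} :
  bstep M G L N (tup vs) G1 L1 N -> length xs = length vs ->
  (forall x, In x xs -> P (L x)) -> forall x, In x xs -> P (L1 x).
Proof.
  intros HM Hlen HP x Hx. destruct vs as [|v vs].
  - destruct xs; [destruct Hx | discriminate].
  - rewrite (bstep_expr_locals HM); auto.
    apply (bstep_non_mode_expr HM). intro m. destruct vs; discriminate.
Qed.

Lemma csteps_decl xs M vs G L N G1 L1 :
  csteps M G L N (tup vs) G1 L1 N -> length xs = length vs ->
  (forall x, In x xs -> L1 x = None) ->
  csteps (TLet xs M) G L N (TMode MRegular) G1 (upd L1 xs vs) N.
Proof.
  intros HM Hlen Hxs. eapply plug_steps_trans; [apply csteps_ctx_let, HM|].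
  apply csteps_base, R_Let; assumption.
Qed.

Lemma csteps_assign xs M vs G L N G1 L1 :
  csteps M G L N (tup vs) G1 L1 N -> length xs = length vs ->
  (forall x, In x xs -> L1 x <> None) ->
  csteps (TAssign xs M) G L N (TMode MRegular) G1 (upd L1 xs vs) N.
Proof.
  intros HM Hlen Hxs. eapply plug_steps_trans; [apply csteps_ctx_assign, HM|].
  apply csteps_base, R_Assign; assumption.
Qed.

Lemma csteps_if_false M body v G L N G0 L0 :
  esteps M G L N (TVal v) G0 L0 N -> vfalse D v ->
  csteps (TIf M body) G L N (TMode MRegular) G0 L0 N.
Proof.
  intros HM Hv. eapply plug_steps_trans; [apply esteps_ctx_if, HM|].
  apply csteps_base, R_IfF, Hv.
Qed.

Lemma csteps_if_true M body v R G L N G0 L0 G1 L1 :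
  esteps M G L N (TVal v) G0 L0 N -> vtrue D v ->
  csteps (TBlock body) G0 L0 N R G1 L1 N ->
  csteps (TIf M body) G L N R G1 L1 N.
Proof.
  intros HM Hv Hbody. eapply plug_steps_trans; [apply esteps_ctx_if, HM|].
  eapply plug_steps_trans; [apply csteps_base, R_IfT, Hv | exact Hbody].
Qed.

Lemma csteps_switch_default M cases dflt v R G L N G0 L0 G1 L1 :
  esteps M G L N (TVal v) G0 L0 N -> ~ In v (map fst cases) ->
  csteps (TBlock dflt) G0 L0 N R G1 L1 N ->
  csteps (TSwitch M cases dflt) G L N R G1 L1 N.
Proof.
  intros HM Hv Hdflt. eapply plug_steps_trans; [apply esteps_ctx_switch, HM|].
  eapply plug_steps_trans; [apply csteps_base, R_SwitchD, Hv | exact Hdflt].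
Qed.

Lemma csteps_switch_case M cases pre c body post dflt R G L N G0 L0 G1 L1 :
  cases = pre ++ (c, body) :: post -> ~ In c (map fst pre) ->
  esteps M G L N (TVal c) G0 L0 N ->
  csteps (TBlock body) G0 L0 N R G1 L1 N ->
  csteps (TSwitch M cases dflt) G L N R G1 L1 N.
Proof.
  intros Hcases Hc HM Hbody. eapply plug_steps_trans; [apply esteps_ctx_switch, HM|].
  eapply plug_steps_trans; [eapply csteps_base, R_SwitchC; eassumption | exact Hbody].
Qed.

Lemma csteps_for_init init M Sp Sb R G L N G1 L1 N1 :
  init <> [] ->
  csteps (TBlock (init ++ [TFor [] M Sp Sb])) G L N R G1 L1 N1 ->
  csteps (TFor init M Sp Sb) G L N R G1 L1 N1.
Proof.
  intros Hinit H. eapply plug_steps_trans; [apply csteps_base, R_ForInit, Hinit | exact H].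
Qed.

Lemma esteps_call f Ms vs ys zs Sb m ws G L N Gn Ln G' L' :
  esteps (TCall f Ms) G L N (TCall f (map TVal vs)) Gn Ln N ->
  N f = Some (ys, zs, Sb) -> length vs = length ys -> NoDup (ys ++ zs) ->
  csteps Sb Gn (mkLf D ys vs zs) N (TMode m) G' L' N -> m = MRegular \/ m = MLeave ->
  lookup_all L' zs = Some ws ->
  esteps (TCall f Ms) G L N (tup ws) G' Ln N.
Proof.
  intros Hargs Hf Hlen Hnd HSb Hm Hws.
  eapply plug_steps_trans; [exact Hargs|].
  eapply plug_steps_trans; [apply esteps_base; eapply R_Call; eassumption|].
  eapply plug_steps_trans; [apply csteps_ctx_frame, HSb|].
  apply esteps_base, R_Ret; [destruct Hm; auto | exact Hws].
Qed.

Lemma esteps_op o Ms vs ws G L N Gn Ln G' :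
  esteps (TOp o Ms) G L N (TOp o (map TVal vs)) Gn Ln N ->
  opc D o vs Gn (inl ws) G' ->
  esteps (TOp o Ms) G L N (tup ws) G' Ln N.
Proof.
  intros Hargs Hop. eapply plug_steps_trans; [exact Hargs|].
  apply esteps_base. exact (R_Op o vs (inl ws) Gn G' Ln N Hop).
Qed.

Lemma csteps_block ss G L N m G1 L1 :
  ns_disj N (funs ss) ->
  bseq ss G L (ns_union N (funs ss)) m G1 L1 ->
  (ss <> [] ->
   csteps (TScope ss N L) G L (ns_union N (funs ss)) (TMode m) G1 (restrict L1 L) N) ->
  csteps (TBlock ss) G L N (TMode m) G1 (restrict L1 L) N.
Proof.
  intros Hdisj Hseq Hscope. destruct ss as [|s ss].
  - inversion Hseq; subst. rewrite (restrict_id (dom_incl_refl _)).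
    apply csteps_base, R_BlockEmpty.
  - eapply plug_steps_trans; [apply csteps_base, R_BlockEnter; [discriminate | exact Hdisj]|].
    apply Hscope. discriminate.
Qed.

Definition arg_ctx (K : list (term D) -> term D) : Prop :=
  forall pre ws t G L N t' G' L' N',
  esteps t G L N t' G' L' N' ->
  esteps (K (pre ++ t :: map TVal ws)) G L N (K (pre ++ t' :: map TVal ws)) G' L' N'.

Lemma arg_ctx_call f : arg_ctx (TCall f).
Proof.
  intros pre ws.
  exact (plug_steps_map (fun t => TCall f (pre ++ t :: map TVal ws)) (fun E => ECall f pre E ws)
           (fun _ _ => eq_refl)).
Qed.

Lemma arg_ctx_op o : arg_ctx (TOp o).
Proof.
  intros pre ws.
  exact (plug_steps_map (fun t => TOp o (pre ++ t :: map TVal ws)) (fun E => EOp o pre E ws)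
           (fun _ _ => eq_refl)).
Qed.

Definition arg_steps K (Ms : list (term D)) G L N vs G' L' : Prop :=
  forall pre ws,
  esteps (K (pre ++ Ms ++ map TVal ws)) G L N (K (pre ++ map TVal (vs ++ ws))) G' L' N.

Lemma arg_steps_nil K G L N : arg_steps K [] G L N [] G L.
Proof. intros pre ws. constructor. Qed.

Lemma arg_steps_cons K M Ms v vs G L N G1 L1 G2 L2 :
  arg_ctx K -> arg_steps K Ms G L N vs G1 L1 -> esteps M G1 L1 N (TVal v) G2 L2 N ->
  arg_steps K (M :: Ms) G L N (v :: vs) G2 L2.
Proof.
  intros HK HMs HM pre ws. eapply plug_steps_trans.
  - specialize (HMs (pre ++ [M]) ws). rewrite <- !app_assoc in HMs. exact HMs.
  - exact (HK pre (vs ++ ws) _ _ _ _ _ _ _ _ HM).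
Qed.

Lemma arg_steps_all K Ms G L N vs G' L' :
  arg_steps K Ms G L N vs G' L' -> esteps (K Ms) G L N (K (map TVal vs)) G' L' N.
Proof. intro H. specialize (H [] []). simpl in H. rewrite !app_nil_r in H. exact H. Qed.

(* Expressions must be simulated under expression contexts, the only ones allowed in
   argument and condition positions. *)
Definition sim_stmt S G L N R G' L' N' : Prop :=
  if expr_term S then esteps S G L N R G' L' N' else csteps S G L N R G' L' N'.

Definition sim_seq ss G L N m G' L' : Prop :=
  ss <> [] -> forall N0 L0, csteps (TScope ss N0 L0) G L N (TMode m) G' (restrict L' L0) N0.

Definition sim_args Ms G L N vs G' L' : Prop :=
  forall K, arg_ctx K -> arg_steps K Ms G L N vs G' L'.

Lemma sim_stmt_csteps S G L N R G' L' N' :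
  sim_stmt S G L N R G' L' N' -> csteps S G L N R G' L' N'.
Proof. unfold sim_stmt. destruct (expr_term S); [apply esteps_csteps | auto]. Qed.

Lemma sim_val_esteps S G L N v G' L' N' :
  bstep S G L N (TVal v) G' L' N' -> sim_stmt S G L N (TVal v) G' L' N' ->
  esteps S G L N (TVal v) G' L' N'.
Proof. intro H. unfold sim_stmt. rewrite (bstep_val_expr H). auto. Qed.

Lemma sim_seq_regular S Ss m G L N G1 L1 G2 L2 :
  csteps S G L N (TMode MRegular) G1 L1 N -> bseq Ss G1 L1 N m G2 L2 ->
  sim_seq Ss G1 L1 N m G2 L2 -> sim_seq (S :: Ss) G L N m G2 L2.
Proof.
  intros HS Hseq Hsim _ N0 L0. destruct Ss as [|S' Ss].
  - inversion Hseq; subst. eapply csteps_scope_last, HS.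
  - eapply plug_steps_trans; [apply csteps_scope_regular; [discriminate | exact HS]|].
    apply Hsim. discriminate.
Qed.

Lemma sim_seq_irreg S Ss m G L N G1 L1 :
  irreg m -> csteps S G L N (TMode m) G1 L1 N -> sim_seq (S :: Ss) G L N m G1 L1.
Proof. intros Hm HS _ N0 L0. eapply csteps_scope_irreg; eassumption. Qed.

Lemma sim_args_call f Ms G L N vs G' L' :
  sim_args Ms G L N vs G' L' -> esteps (TCall f Ms) G L N (TCall f (map TVal vs)) G' L' N.
Proof. intro H. apply arg_steps_all, H, arg_ctx_call. Qed.

Lemma sim_args_op o Ms G L N vs G' L' :
  sim_args Ms G L N vs G' L' -> esteps (TOp o Ms) G L N (TOp o (map TVal vs)) G' L' N.
Proof. intro H. apply arg_steps_all, H, arg_ctx_op. Qed.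

Theorem bstep_sim S G L N R G' L' N' :
  bstep S G L N R G' L' N' -> sim_stmt S G L N R G' L' N'.
Proof.
  revert S G L N R G' L' N'.
  apply (bstep_mut D (fun S G L N R G' L' N' _ => sim_stmt S G L N R G' L' N')
                     (fun ss G L N m G' L' _ => sim_seq ss G L N m G' L')
                     (fun Ms G L N vs G' L' _ => sim_args Ms G L N vs G' L'));
    intros; cbn [sim_stmt expr_term] in *.
  - eapply csteps_block; eauto.
  - apply csteps_base, R_FunDef.
  - eapply csteps_decl; eauto using sim_stmt_csteps.
    eapply (bstep_decl_locals (fun o => o = None)); eassumption.
  - eapply csteps_assign; eauto using sim_stmt_csteps.
    eapply (bstep_decl_locals (fun o => o <> None)); eassumption.
  - eapply csteps_if_false; eauto using sim_val_esteps.
  - eapply csteps_if_true; eauto using sim_val_esteps.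
  - eapply csteps_switch_default; eauto using sim_val_esteps.
  - eapply csteps_switch_case; eauto using sim_val_esteps.
  - eapply csteps_for_init; eauto.
  - eapply csteps_for_false; eauto using sim_val_esteps.
  - eapply csteps_for_halt_body; eauto using sim_val_esteps, bstep_block_dom.
  - eapply csteps_for_halt_post; eauto using sim_val_esteps.
    eapply dom_incl_trans; eauto using bstep_block_dom.
  - eapply csteps_for_loop; eauto using sim_val_esteps, bstep_loop_mode.
    eapply dom_incl_trans; [eapply bstep_loop_dom; eassumption|].
    eapply dom_incl_trans; eauto using bstep_block_dom.
  - apply esteps_base, R_Var. assumption.
  - constructor.
  - constructor.
  - eapply esteps_call; eauto using sim_args_call, sim_stmt_csteps.
  - eapply esteps_op; eauto using sim_args_op.
  - intro; congruence.
  - eapply sim_seq_regular; eauto using sim_stmt_csteps.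
  - eapply sim_seq_irreg; eauto using sim_stmt_csteps.
  - intros K _. apply arg_steps_nil.
  - intros K HK. eapply arg_steps_cons; eauto using sim_val_esteps.
Qed.

End Simulation.

Theorem lemma6 (D : dialect) (S : term D) (G : gstate D) (L : locals D) (N : ns D)
    (Sret : term D) (G' : gstate D) (L' : locals D) (N' : ns D) :
  is_source S = true ->
  is_ret Sret ->
  bstep S G L N Sret G' L' N' ->
  steps S G L N Sret G' L' N'.
Proof.
  intros _ _ H. apply csteps_steps, sim_stmt_csteps, bstep_sim, H.
Qed.
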